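(* Let $m<n$ be natural numbers, let $\mathcal{I}$ be the ideal of thin subsets of $[\omega]^n$, and let $\psi=\lambda^{(n-m)}\partial^{(n-m)}$. Then there is $S\subseteq[\omega]^n$ which is not $(<\!\aleph_0)$-near-closed.
   Context: $T\subseteq[\omega]^n$ is thick if for every $j\geq n$ there is $s\in[\omega]^j$ with $[s]^n\subseteq T$; thin otherwise. For $T\subseteq[\omega]^n$, $\partial^{(n-m)}T=\{s\in[\omega]^m:\exists t\in[\omega]^{n-m}\ (s\cup t\in T)\}$, and for $A\subseteq[\omega]^m$, $\lambda^{(n-m)}A=\{s\in[\omega]^n:[s]^m\subseteq A\}$. A set $T\subseteq[\omega]^n$ is closed if $\psi(T)=T$. A set $S$ is $(<\!\aleph_0)$-near-closed if there are $k<\omega$ and closed $T_0,\dots,T_{k-1}$ with $S\,\Delta\,(T_0\cup\dots\cup T_{k-1})\in\mathcal{I}$. *)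

From HB Require Import structures.
From mathcomp Require Import all_boot.
From mathcomp Require Import finmap.

Set Implicit Arguments.
Unset Strict Implicit.
Unset Printing Implicit Defensive.

Local Open Scope fset_scope.

(* Finite subsets of omega are represented as {fset nat};
   [omega]^n = { s : {fset nat} | #|s| = n }.
   A family of finite sets is a predicate {fset nat} -> Prop. *)

Definition fam := {fset nat} -> Prop.

Definition subfam (n : nat) (T : fam) : Prop :=
  forall s, T s -> #|` s| = n.

Definition thick (n : nat) (T : fam) : Prop :=
  forall j, n <= j -> exists s : {fset nat},
    #|` s| = j /\ (forall t : {fset nat}, t `<=` s -> #|` t| = n -> T t).

Definition thin (n : nat) (T : fam) : Prop := ~ thick n T.

Definition shadow (n m : nat) (T : fam) : fam :=
  fun s => #|` s| = m /\ exists t : {fset nat}, #|` t| = n - m /\ T (s `|` t).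

Definition lam (n m : nat) (A : fam) : fam :=
  fun s => #|` s| = n /\ (forall t : {fset nat}, t `<=` s -> #|` t| = m -> A t).

Definition psi (n m : nat) (T : fam) : fam := lam n m (shadow n m T).

Definition closed (n m : nat) (T : fam) : Prop :=
  forall s, psi n m T s <-> T s.

Definition symdiff (A B : fam) : fam :=
  fun s => (A s /\ ~ B s) \/ (B s /\ ~ A s).

Definition bigunion (k : nat) (T : nat -> fam) : fam :=
  fun s => exists i, i < k /\ T i s.

Definition near_closed (n m : nat) (S : fam) : Prop :=
  exists (k : nat) (T : nat -> fam),
    (forall i, i < k -> closed n m (T i)) /\
    thin n (symdiff S (bigunion k T)).

From Pilot Require Import Defs.
From mathcomp Require Import all_boot finmap.
From mathcomp Require Import all_algebra zify boolp.

(* For each pair (j, k) we build a finite family of n-sets that no union of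
   k sets of the form lambda^(n-m) A matches on all n-subsets of any j-set.
   It lives on the grid [0, j) x [0, V): the graphs of polynomial maps of
   degree < n with coefficients below M pairwise share fewer than n points,
   so the n-subsets of distinct graphs are distinct and the family can be
   chosen independently on each of the M^n graphs.  A union bound then works,
   because an adversary (A_0, ..., A_(k-1)) only matters through its m-sets,
   and there are 2^(k * C(jV, m)) of those choices, an exponent of degree
   m < n in M.  Placing these blocks on disjoint layers of omega gives S: a
   closed T_i equals lambda^(n-m) (partial^(n-m) T_i), so the block for
   (j, k) exhibits a j-set all of whose n-subsets lie in S Delta (T_0 u ... u
   T_(k-1)), for every j. *)

Set Implicit Arguments.
Unset Strict Implicit.
Unset Printing Implicit Defensive.

Import GRing.Theory Num.Theory.

Lemma nat_poly_coef_eq (d : nat) (c c' : nat -> nat) (s : seq nat) :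
  uniq s -> d <= size s ->
  {in s, forall x, \sum_(l < d) c l * x ^ l = \sum_(l < d) c' l * x ^ l} ->
  forall l, l < d -> c l = c' l.
Proof.
move=> s_uniq s_large agree.
pose q : {poly int} := (\poly_(l < d) ((c l)%:R - (c' l)%:R))%R.
have q_roots : all (root q) [seq (x%:R)%R | x <- s].
  apply/allP => _ /mapP [x xs ->]; rewrite /root horner_poly.
  have /(congr1 (fun y : nat => (y%:R : int)%R)) := agree x xs; rewrite !natr_sum => E.
  rewrite (eq_bigr (fun l : 'I_d => (c l * x ^ l)%:R - (c' l * x ^ l)%:R)%R).
    by rewrite sumrB E subrr.
  by move=> l _; rewrite !natrM !natrX mulrBl.
have q0 : q = 0%R.
  apply: contraTeq s_large => /max_poly_roots /(_ q_roots).
  rewrite map_inj_uniq ?s_uniq; last by move=> x y /eqP; rewrite eqr_nat => /eqP.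
  by rewrite size_map -ltnNge => /(_ isT) /leq_trans; apply; apply: size_poly.
move=> l ld; have /eqP := congr1 (fun p : {poly int} => p`_l)%R q0.
by rewrite coef_poly ld coef0 subr_eq0 eqr_nat => /eqP.
Qed.

Lemma leq_expn2r x y e : x <= y -> x ^ e <= y ^ e.
Proof. by case: e => [|e] xy; rewrite ?expn0 ?leq_exp2r. Qed.

Lemma bernoulli_expn x e : x ^ e.+1 + e.+1 * x ^ e <= (x + 1) ^ e.+1.
Proof.
elim: e => [|e IH]; first by rewrite expn1 expn0; lia.
move: IH; rewrite (expnS x e.+1) (expnS (x + 1) e.+1) (expnS x e).
set X := x ^ e; set Y := (x + 1) ^ e.+1; nia.
Qed.

Lemma double_expn_pred_le a : 0 < a -> 2 * a.-1 ^ a <= a ^ a.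
Proof.
case: a => [|[|b]] // _.
have := bernoulli_expn b.+1 b.+1; rewrite addn1 (expnS b.+1 b.+1).
set X := b.+1 ^ b.+1; set Y := b.+2 ^ b.+2; nia.
Qed.

Lemma union_bound_expn a B P : 0 < a -> a * B.+1 <= P -> 2 ^ B * a.-1 ^ P < a ^ P.
Proof.
move=> a_gt0 large.
have head : 2 ^ B.+1 * a.-1 ^ (a * B.+1) <= a ^ (a * B.+1).
  rewrite !expnM -expnMn leq_exp2r //.
  exact: double_expn_pred_le.
have tail : a.-1 ^ (P - a * B.+1) <= a ^ (P - a * B.+1) by apply: leq_expn2r; lia.
have aP_gt0 : 0 < a ^ P by rewrite expn_gt0 a_gt0.
rewrite -(subnKC large) !expnD in aP_gt0 *.
move: head tail aP_gt0; rewrite expnS.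
set u := a.-1 ^ (a * B.+1); set v := a ^ (a * B.+1).
set u' := a.-1 ^ (P - a * B.+1); set v' := a ^ (P - a * B.+1); set w := 2 ^ B.
nia.
Qed.

Lemma bin_leq_expn N m : 'C(N, m) <= N ^ m.
Proof.
apply: leq_trans (leq_pmulr _ (fact_gt0 m)) _; rewrite bin_ffact ffact_prod.
rewrite (leq_trans (leq_prod (fun (i : 'I_m) _ => leq_subr i N))) //.
by rewrite prod_nat_const card_ord.
Qed.

Lemma card_bigcup_leq (I T : finType) (P : pred I) (B : I -> {set T}) :
  #|\bigcup_(i | P i) B i| <= \sum_(i | P i) #|B i|.
Proof.
elim/big_rec2: _ => [|i k U _ IH]; first by rewrite cards0.
by apply: leq_trans (leq_card_setU _ _) _; rewrite leq_add2l.
Qed.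

Lemma exists_ffun_hitting (A F Z : finType) (Adv : {set A}) (c : A -> F -> Z) :
  #|Adv| * #|Z|.-1 ^ #|F| < #|Z| ^ #|F| ->
  exists pi : {ffun F -> Z}, forall a, a \in Adv -> exists f, pi f = c a f.
Proof.
move=> few_adversaries.
pose missing a := [set pi : {ffun F -> Z} | [forall f, pi f != c a f]].
have card_missing a : #|missing a| = #|Z|.-1 ^ #|F|.
  have -> : missing a = [set pi in family (fun f => predC1 (c a f))].
    by apply/setP => pi; rewrite !inE; apply/forallP/familyP => /= h f; have := h f.
  rewrite cardsE card_family [#|F|]cardT /image_mem; elim: (enum F) => //= f s ->.
  by rewrite expnS; congr (_ * _); apply: cardC1.
have [pi pi_hits] : exists pi, pi \notin \bigcup_(a in Adv) missing a.
  apply/existsP; rewrite -negb_forall; apply: contraTN few_adversaries => /forallP all_missing.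
  rewrite -leqNgt -card_ffun -(@cardsT {ffun F -> Z}).
  apply: leq_trans (subset_leq_card (_ : _ \subset \bigcup_(a in Adv) missing a)) _.
    by apply/subsetP => pi _; apply: all_missing.
  apply: leq_trans (card_bigcup_leq _ _) _.
  by under eq_bigr do rewrite card_missing; rewrite sum_nat_const.
exists pi => a a_adv.
have : pi \notin missing a by apply: contra pi_hits => pi_missing; apply/bigcupP; exists a.
by rewrite inE negb_forall => /existsP [f /negPn /eqP]; exists f.
Qed.

Section PolynomialCurves.

Variables d j M : nat.

Definition curve_height := (d.+1 * M * j ^ d.+1).+1.

Definition curve_value (f : {ffun 'I_d.+1 -> 'I_M}) (x : nat) : nat :=
  \sum_(l < d.+1) f l * x ^ l.

Lemma curve_value_lt f (i : 'I_j) : curve_value f i < curve_height.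
Proof.
have j_gt0 : 0 < j by apply: leq_ltn_trans (ltn_ord i).
rewrite ltnS -mulnA -[d.+1 in X in _ <= X]card_ord -sum_nat_const.
apply: leq_sum => l _; apply: leq_mul; first exact: ltnW.
apply: leq_trans (leq_expn2r _ (ltnW (ltn_ord i))) _.
by rewrite card_ord leq_pexp2l // ltnW.
Qed.

Definition curve_point f (i : 'I_j) : 'I_j * 'I_curve_height :=
  (i, Ordinal (curve_value_lt f i)).

Lemma curve_point_inj f : injective (curve_point f).
Proof. by move=> i i' []. Qed.

Lemma curve_image_inj f f' (J J' : {set 'I_j}) :
  #|J| = d.+1 -> curve_point f @: J = curve_point f' @: J' -> f = f'.
Proof.
move=> card_J same_image.
have agree : {in map val (enum J), forall x,
    \sum_(l < d.+1) f (inord l) * x ^ l = \sum_(l < d.+1) f' (inord l) * x ^ l}.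
  move=> x /mapP [i]; rewrite mem_enum => iJ ->.
  have : curve_point f i \in curve_point f' @: J' by rewrite -same_image imset_f.
  case/imsetP => i' _ [ii' value_eq]; subst i'.
  suff value_inord (g : {ffun 'I_d.+1 -> 'I_M}) :
      \sum_(l < d.+1) g (inord l) * val i ^ l = curve_value g i.
    by rewrite !value_inord.
  by apply: eq_bigr => l _; rewrite inord_val.
have uniq_J : uniq (map val (enum J)) by rewrite map_inj_uniq ?enum_uniq //; apply: val_inj.
have size_J : d.+1 <= size (map val (enum J)) by rewrite size_map -cardE card_J.
apply/ffunP => l; apply: val_inj.
have := nat_poly_coef_eq (c := fun l => f (inord l)) (c' := fun l => f' (inord l)).
by move=> /(_ d.+1 _ uniq_J size_J agree l (ltn_ord l)); rewrite inord_val.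
Qed.

Definition curve_family (pi : {ffun 'I_d.+1 -> 'I_M} -> {set {set 'I_j}}) :
    {set {set 'I_j * 'I_curve_height}} :=
  [set w | [exists f, [exists J : {set 'I_j},
    [&& #|J| == d.+1, w == curve_point f @: J & J \in pi f]]]].

Lemma card_curve_family pi w : w \in curve_family pi -> #|w| = d.+1.
Proof.
rewrite inE => /existsP [f /existsP [J /and3P [/eqP card_J /eqP -> _]]].
by rewrite card_imset //; exact: curve_point_inj.
Qed.

Lemma mem_curve_family pi f (J : {set 'I_j}) :
  #|J| = d.+1 -> (curve_point f @: J \in curve_family pi) = (J \in pi f).
Proof.
move=> card_J; rewrite inE; apply/existsP/idP => [[f' /existsP [J' H]] | Jpi].
  case/and3P: H => [/eqP card_J' /eqP same J'pi].
  have f'_eq : f' = f by apply: curve_image_inj card_J' (esym same).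
  by subst f'; rewrite (imset_inj (@curve_point_inj f) same).
by exists f; apply/existsP; exists J; rewrite card_J Jpi !eqxx.
Qed.

End PolynomialCurves.

Lemma modulus_bound a0 K m k e : 0 < a0 -> m < e ->
  a0 * ((a0 * (K ^ m * k).+1 * K) ^ m * k).+1 <= (a0 * (K ^ m * k).+1) ^ e.
Proof.
move=> a0_gt0 lt_me; set M := a0 * (K ^ m * k).+1.
have M_gt0 : 0 < M by rewrite muln_gt0 a0_gt0.
rewrite (leq_trans _ (leq_pexp2l M_gt0 lt_me)) // expnS expnMn.
have : 0 < M ^ m by rewrite expn_gt0 M_gt0.
rewrite /M; set X := _ ^ m; set Y := K ^ m; nia.
Qed.

Definition covered (X : finType) (m k : nat) (a : 'I_k -> {set {set X}}) (w : {set X}) :=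
  [exists i, [forall v : {set X}, (v \subset w) && (#|v| == m) ==> (v \in a i)]].

Lemma covered_restrict (X : finType) m k (a : 'I_k -> {set {set X}}) (w : {set X}) :
  covered m [ffun i => a i :&: [set v : {set X} | #|v| == m]] w = covered m a w.
Proof.
apply: eq_existsb => i; apply: eq_forallb => v; rewrite ffunE !inE.
by case: (v \subset w); case: (#|v| == m); rewrite ?andbT.
Qed.

Lemma imset_preimset (aT rT : finType) (f : aT -> rT) (A : {set aT}) (w : {set rT}) :
  w \subset f @: A -> f @: (f @^-1: w) = w.
Proof.
move=> /subsetP sub_w; apply/setP => y; apply/imsetP/idP => [[x] | yw].
  by rewrite inE => xw ->.
by have /imsetP [x _ y_eq] := sub_w y yw; exists x; rewrite // inE -y_eq.
Qed.

Lemma exists_diagonal_block n m j k : m < n ->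
  exists (X : finType) (S : {set {set X}}), (forall w, w \in S -> #|w| = n) /\
  forall a : 'I_k -> {set {set X}}, exists2 x : {set X}, #|x| = j &
    forall w : {set X}, w \subset x -> #|w| = n -> (w \in S) = ~~ covered m a w.
Proof.
case: n => // d lt_md.
pose a0 := #|{set {set 'I_j}}|.
pose K := j * (d.+1 * j ^ d.+1).+1.
pose M := a0 * (K ^ m * k).+1.
pose X := ('I_j * 'I_(curve_height d j M))%type.
pose pt := @curve_point d j M.
pose Ms := [set v : {set X} | #|v| == m].
pose Adv := [set a : {ffun 'I_k -> {set {set X}}} | a \in ffun_on (powerset Ms)].
pose c (a : {ffun 'I_k -> {set {set X}}}) f : {set {set 'I_j}} :=
  [set J : {set 'I_j} | ~~ covered m a (pt f @: J)].
have few_adversaries :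
    #|Adv| * a0.-1 ^ #|{ffun 'I_d.+1 -> 'I_M}| < a0 ^ #|{ffun 'I_d.+1 -> 'I_M}|.
  have a0_gt0 : 0 < a0 by apply/card_gt0P; exists set0.
  rewrite card_ffun !card_ord cardsE card_ffun_on card_powerset card_ord -expnM.
  apply: union_bound_expn => //; apply: leq_trans (modulus_bound K k a0_gt0 lt_md).
  apply: leq_mul => //; rewrite ltnS; apply: leq_mul => //.
  rewrite card_draws; apply: leq_trans (bin_leq_expn _ _) (leq_expn2r _ _).
  rewrite card_prod !card_ord /curve_height.
  have : 0 < M by rewrite muln_gt0 a0_gt0.
  set J := j ^ d.+1; nia.
have [pi pi_hits] := exists_ffun_hitting c few_adversaries.
exists X, (curve_family pi); split; first exact: card_curve_family.
move=> a; pose a' := [ffun i => a i :&: Ms].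
have a'_adv : a' \in Adv by rewrite inE; apply/ffun_onP => i; rewrite ffunE powersetE subsetIr.
have [f pi_f] := pi_hits a' a'_adv.
exists (pt f @: setT); first by rewrite card_imset ?cardsT ?card_ord //; exact: curve_point_inj.
move=> w sub_w card_w.
have [J card_J ->] : exists2 J : {set 'I_j}, #|J| = d.+1 & w = pt f @: J.
  exists (pt f @^-1: w); last by rewrite (imset_preimset sub_w).
  by rewrite -card_w -{2}(imset_preimset sub_w) card_imset //; exact: curve_point_inj.
by rewrite mem_curve_family // pi_f inE covered_restrict.
Qed.

Local Open Scope fset_scope.

Definition layer (jk : nat * nat) (z : nat) : Prop := exists y : nat, z = choice.pickle (jk, y).

Lemma layer_inj jk jk' z : layer jk z -> layer jk' z -> jk = jk'.
Proof. by move=> [y ->] [y' /(pcan_inj choice.pickleK)] []. Qed.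

Section FsetImage.

Variables (X : finType) (e : X -> nat).
Hypothesis e_inj : injective e.

Lemma card_fset_image (w : {set X}) : #|` [fset e x | x in w]| = #|w|.
Proof.
rewrite card_imfset // cardE; apply/perm_size/uniq_perm; rewrite ?enum_finmem_uniq ?enum_uniq //.
Qed.

Lemma mem_fset_image (w : {set X}) x : (e x \in [fset e x | x in w]) = (x \in w).
Proof. by rewrite mem_imfset. Qed.

Lemma fset_image_inj : injective (fun w : {set X} => [fset e x | x in w]).
Proof. by move=> v w same; apply/setP => x; rewrite -!mem_fset_image same. Qed.

Lemma fsubset_image (v w : {set X}) :
  v \subset w -> [fset e x | x in v] `<=` [fset e x | x in w].
Proof.
move=> /subsetP sub_vw; apply/fsubsetP => _ /imfsetP [x xv ->].
by rewrite mem_fset_image sub_vw.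
Qed.

Lemma fsubset_imageP (t : {fset nat}) (w : {set X}) :
  t `<=` [fset e x | x in w] -> exists2 v : {set X}, v \subset w & t = [fset e x | x in v].
Proof.
move=> /fsubsetP sub_t; exists [set x | e x \in t].
  by apply/subsetP => x; rewrite inE => /sub_t; rewrite mem_fset_image.
apply/fsetP => z; apply/idP/imfsetP => [zt | [x] /[!inE] xt -> //].
by have /imfsetP [x _ z_eq] := sub_t z zt; exists x; rewrite // inE -z_eq.
Qed.

Lemma covered_fset_image n m k (A : nat -> fam) (a : 'I_k -> {set {set X}}) (w : {set X}) :
  (forall (i : 'I_k) v, v \in a i <-> A i [fset e x | x in v]) -> #|w| = n ->
  covered m a w <-> bigunion k (fun i => lam n m (A i)) [fset e x | x in w].
Proof.
move=> a_spec card_w; split.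
  move=> /existsP [i /forallP cov]; exists i; split => //; split; first by rewrite card_fset_image.
  move=> t sub_t; have [v sub_v ->] := fsubset_imageP sub_t; rewrite card_fset_image => card_v.
  by apply/a_spec; apply: (implyP (cov v)); rewrite sub_v card_v eqxx.
move=> [i [lt_ik [_ lam_i]]]; apply/existsP; exists (Ordinal lt_ik).
apply/forallP => v; apply/implyP => /andP [sub_v /eqP card_v].
by apply/a_spec; apply: lam_i; [exact: fsubset_image | rewrite card_fset_image].
Qed.

End FsetImage.

Definition diagonal_layer (n m : nat) (jk : nat * nat) (B : fam) : Prop :=
  [/\ subfam n B, forall s, B s -> forall z, z \in s -> layer jk z &
    forall A : nat -> fam, exists x : {fset nat},
      [/\ #|` x| = jk.1, forall z, z \in x -> layer jk z &
        forall w, w `<=` x -> #|` w| = n ->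
          B w <-> ~ bigunion jk.2 (fun i => lam n m (A i)) w]].

Lemma exists_diagonal_layer n m jk : m < n -> exists B : fam, diagonal_layer n m jk B.
Proof.
move=> lt_mn; have [X [S [card_S S_diag]]] := exists_diagonal_block jk.1 jk.2 lt_mn.
pose e (x : X) := choice.pickle (jk, choice.pickle x).
have e_inj : injective e by move=> x y /(pcan_inj choice.pickleK) [/(pcan_inj choice.pickleK)].
have e_layer x : layer jk (e x) by exists (choice.pickle x).
exists (fun s => exists2 w, w \in S & s = [fset e x | x in w]); split.
- by move=> _ [w wS ->]; rewrite card_fset_image // card_S.
- by move=> _ [w _ ->] _ /imfsetP [x _ ->].
move=> A; pose a (i : 'I_jk.2) := [set v : {set X} | `[< A i [fset e x | x in v] >]].
have a_spec i v : v \in a i <-> A i [fset e x | x in v] by rewrite inE; split => /asboolP.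
have [x card_x x_diag] := S_diag a.
exists [fset e x | x in x]; split => [||t].
- by rewrite card_fset_image.
- by move=> _ /imfsetP [y _ ->].
move=> /(fsubset_imageP e_inj) [w sub_w ->]; rewrite card_fset_image // => card_w.
rewrite -(covered_fset_image e_inj m a_spec card_w).
have -> : (exists2 v, v \in S & [fset e x | x in w] = [fset e x | x in v]) <-> w \in S.
  by split => [[v vS /(fset_image_inj e_inj) ->] // | wS]; exists w.
by rewrite x_diag //; split => /negP.
Qed.

Lemma symdiff_of_iff_not (A B : fam) s : (A s <-> ~ B s) -> symdiff A B s.
Proof.
move=> AnB; have [Bs | nBs] := pselect (B s); [right | left]; split => //.
  by move/AnB.
exact/AnB.
Qed.

Lemma bigunion_closed n m k (T : nat -> fam) s :
  (forall i, i < k -> Defs.closed n m (T i)) ->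
  bigunion k T s <-> bigunion k (fun i => lam n m (shadow n m (T i))) s.
Proof. by move=> T_closed; split=> -[i [lt_ik Ts]]; exists i; split=> //; apply/T_closed. Qed.

Theorem mainTheorem12 (m n : nat) (hmn : m < n) :
  exists S : fam, subfam n S /\ ~ near_closed n m S.
Proof.
have [B B_diag] := choice (fun jk => exists_diagonal_layer jk hmn).
exists (fun s => exists jk, B jk s); split.
  by move=> s [jk]; case: (B_diag jk) => card_B _ _; apply: card_B.
move=> [k [T [T_closed]]]; apply => j _.
case: (B_diag (j, k)) => _ _ /(_ (fun i => shadow n m (T i))) [x [card_x x_layer /= x_diag]].
exists x; split => // w sub_w card_w.
apply: symdiff_of_iff_not; rewrite (bigunion_closed _ T_closed) -x_diag //.
split => [[jk Bw] | Bw]; last by exists (j, k).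
have /fset0Pn [z zw] : w != fset0 by rewrite -cardfs_gt0 card_w (leq_ltn_trans _ hmn).
case: (B_diag jk) => _ B_layer _.
by rewrite (layer_inj (x_layer z (fsubsetP sub_w z zw)) (B_layer w Bw z zw)).
Qed.
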